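(* Let $n\ge1$, let $p_0$ be the origin of $\mathbb{Z}^n$ and let $p=(p_1,\dots,p_n)\in\mathbb{Z}^n$ with all $p_j\ge 0$. Then there exists at least one linear path from $p_0$ to $p$, i.e. a monotone discrete path $H=(h_0=p_0,h_1,\dots,h_N=p)$ with $N=p_1+\dots+p_n$ such that for every point $h\in H$, the voxel centered at $h$ intersects the line segment $\overline{p_0p}$.
   Context: A monotone discrete path from $p_0$ to $p$ is a sequence of points of $\mathbb{Z}^n$ starting at $p_0$ and ending at $p$ in which each successive point is obtained from the previous one by increasing exactly one coordinate by $1$. The voxel centered at a grid point $h=(h_1,\dots,h_n)\in\mathbb{Z}^n$ is the closed axis-parallel unit hypercube $\prod_{j=1}^n[h_j-\tfrac12,h_j+\tfrac12]$. A monotone discrete path from $p_0$ to $p$ is called linear if the voxel centered at each of its points intersects the segment $\overline{p_0p}$. *)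

From HB Require Import structures.
From mathcomp Require Import all_boot all_order all_algebra.
Set Implicit Arguments. Unset Strict Implicit. Unset Printing Implicit Defensive.
Import Order.TTheory GRing.Theory Num.Theory.
Local Open Scope ring_scope.

Definition point (n : nat) := {ffun 'I_n -> int}.

Definition origin (n : nat) : point n := [ffun _ => 0].

Definition unit_step (n : nat) (a b : point n) : bool :=
  [exists i : 'I_n, (b i == a i + 1) && [forall j : 'I_n, (j != i) ==> (b j == a j)]].

Definition monotone_path (n : nat) (p0 p : point n) (s : seq (point n)) : bool :=
  path (@unit_step n) p0 s && (last p0 s == p).

Definition voxel_meets_segment (R : realFieldType) (n : nat) (p0 p h : point n) : Prop :=
  exists t : R, 0 <= t /\ t <= 1 /\
    forall j : 'I_n,
      `|(p0 j)%:~R + t * (p j - p0 j)%:~R - (h j)%:~R| <= 1 / 2%:R.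

Definition linear_path (R : realFieldType) (n : nat) (p0 p : point n)
    (s : seq (point n)) : Prop :=
  monotone_path p0 p s /\
  forall h, h \in p0 :: s -> voxel_meets_segment R p0 p h.

From HB Require Import structures.
From mathcomp Require Import all_boot all_order all_algebra.
From mathcomp Require Import zify lra.
Import Order.TTheory GRing.Theory Num.Theory.
Local Open Scope ring_scope.
Set Implicit Arguments. Unset Strict Implicit.

(* Invariant: the current point h satisfies 0 <= h <= p coordinatewise and
   there is a time t in [0, 1] with |t p_k - h_k| <= 1/2 for every k, i.e.
   the voxel of h meets the segment [0, p] at the point t p.
   Step: for every coordinate k with h_k < p_k, the segment leaves the slab
   |x_k - h_k| <= 1/2 at the "exit time" (h_k + 1/2) / p_k.  Increasing the
   coordinate j with the smallest exit time keeps the invariant, witnessed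
   by that exit time: coordinate j sits exactly on the boundary of the new
   slab, and no other coordinate has left its slab yet. *)

(* If the segment point t b is within 1/2 of a in a coordinate where
   0 <= a <= b, it stays so at any later time s <= 1 that does not yet reach
   the exit level a + 1/2 (a condition void when a = b, where s <= 1 is
   enough). *)
Lemma stays_in_slab (R : realFieldType) (a b t s : R) :
  0 <= a -> a <= b -> `|t * b - a| <= 1 / 2%:R -> t <= s -> s <= 1 ->
  (a < b -> s * b <= a + 1 / 2%:R) -> `|s * b - a| <= 1 / 2%:R.
Proof.
move=> a0 ab + ts s1 exit; rewrite !ler_norml => /andP [lo _].
have b0 : 0 <= b by exact: le_trans ab.
have later : t * b <= s * b by rewrite ler_wpM2r.
have upper : s * b <= a + 1 / 2%:R.
  have [ltab | eqab] := ltrP a b; first exact: exit.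
  have : s * b <= 1 * b by rewrite ler_wpM2r.
  lra.
apply/andP; split; lra.
Qed.

Section GreedyLinearPath.
Variables (R : realFieldType) (n : nat) (p : point n).

Definition near_segment (h : point n) : Prop :=
  exists t : R, 0 <= t /\ t <= 1 /\
    forall k, `|t * (p k)%:~R - (h k)%:~R| <= 1 / 2%:R.

Definition in_box (h : point n) : Prop := forall k, 0 <= h k <= p k.

Definition remaining (h : point n) : int := \sum_k (p k - h k).

Definition bump (h : point n) (j : 'I_n) : point n :=
  [ffun k => h k + (k == j)%:R].

Definition exit_time (h : point n) (k : 'I_n) : R :=
  ((h k)%:~R + 1 / 2%:R) / (p k)%:~R.

Lemma unit_step_bump (h : point n) (j : 'I_n) : unit_step h (bump h j).
Proof.
apply/existsP; exists j; rewrite ffunE eqxx eqxx /=.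
by apply/forallP => k; apply/implyP => /negbTE nkj; rewrite ffunE nkj addr0.
Qed.

Lemma remaining_bump (h : point n) (j : 'I_n) :
  remaining (bump h j) = remaining h - 1.
Proof.
have one : \sum_k (k == j)%:R = 1%R :> int.
  by rewrite (bigD1 j) //= eqxx big1 ?addr0 // => k /negbTE ->.
rewrite /remaining -one -sumrB.
by apply: eq_bigr => k _; rewrite ffunE opprD addrA.
Qed.

Lemma in_box_bump (h : point n) (j : 'I_n) :
  in_box h -> h j < p j -> in_box (bump h j).
Proof.
move=> hb hj k; have := hb k; rewrite ffunE.
by case: eqP => [-> | _]; rewrite ?addr0 //; lia.
Qed.

Lemma exit_time_spec (h : point n) (j : 'I_n) (t : R) :
  0 <= h j -> h j < p j -> `|t * (p j)%:~R - (h j)%:~R| <= 1 / 2%:R ->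
  [/\ exit_time h j * (p j)%:~R = (h j)%:~R + 1 / 2%:R,
      0 <= exit_time h j, exit_time h j <= 1 & t <= exit_time h j].
Proof.
move=> h0 hp; rewrite ler_norml => /andP [_ tj].
have hp1 : h j + 1 <= p j by lia.
move: hp1 h0; rewrite -(ler_int R) -(ler_int R 0) intrD => hp1 h0.
have p0 : 0 < ((p j)%:~R : R) by lra.
split.
- by rewrite /exit_time divfK // lt0r_neq0.
- by rewrite divr_ge0 //; lra.
- by rewrite ler_pdivrMr //; lra.
- by rewrite ler_pdivlMr //; lra.
Qed.

Lemma near_segment_greedy_step (h : point n) (j0 : 'I_n) :
  in_box h -> h j0 < p j0 -> near_segment h ->
  exists j, h j < p j /\ near_segment (bump h j).
Proof.
move=> hb hj0 [t [t0 [t1 Ht]]].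
case: (arg_minP (P := fun k => h k < p k) (exit_time h) hj0) => j hj jmin.
have h0 : 0 <= h j by have /andP [] := hb j.
have [Ej E0 E1 tE] := exit_time_spec h0 hj (Ht j).
exists j; split => //; exists (exit_time h j); do 2!split => //.
move=> k; rewrite ffunE; case: eqP => [-> | _]; last first.
  have /andP [hk0 hkp] := hb k; rewrite addr0.
  apply: (stays_in_slab _ _ (Ht k)) => //; rewrite ?ler0z ?ler_int ?ltr_int //.
  move=> hk; have := jmin k hk; rewrite /exit_time ler_pdivlMr //.
  by rewrite (ltr_int R 0); apply: le_lt_trans hk.
rewrite /= intrD Ej ler_norml; apply/andP; split; lra.
Qed.

Lemma greedy_path (m : nat) (h : point n) :
  in_box h -> remaining h = m%:Z -> near_segment h ->
  exists s, [/\ path (@unit_step n) h s, last h s = p,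
                {in h :: s, forall x, near_segment x} & size s = m].
Proof.
elim: m h => [|m IH] h hb hm hI.
  have done_k k : p k - h k = 0.
    apply: (psumr_eq0P _ hm) => // i _; have := hb i; lia.
  have hp : h = p by apply/ffunP => k; by apply/eqP; rewrite eq_sym -subr_eq0 done_k.
  by exists [::]; split => // x; rewrite inE => /eqP ->.
have [j0 hj0 | none] := pickP (fun k => h k < p k); last first.
  suff : remaining h = 0 by rewrite hm.
  by apply: big1 => k _; have := none k; have := hb k; lia.
have [j [hj hI']] := near_segment_greedy_step hb hj0 hI.
have hm' : remaining (bump h j) = m%:Z by rewrite remaining_bump hm; lia.
have [s [sp sl sI ssz]] := IH _ (in_box_bump hb hj) hm' hI'.
exists (bump h j :: s); split => //=; first by rewrite unit_step_bump.
  by move=> x; rewrite inE => /orP [/eqP -> | /sI].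
by rewrite ssz.
Qed.

End GreedyLinearPath.

Theorem fact1 (R : realFieldType) (n : nat) (hn : (1 <= n)%N) (p : point n)
    (hp : forall j : 'I_n, 0 <= p j) :
  exists s : seq (point n),
    linear_path R (origin n) p s /\ (size s)%:Z = \sum_(j < n) p j.
Proof.
have [m Hm] : exists m : nat, \sum_(j < n) p j = m%:Z.
  by exists (absz (\sum_(j < n) p j)); rewrite gez0_abs // sumr_ge0.
have hb : in_box p (origin n) by move=> j; rewrite ffunE hp.
have hm : remaining p (origin n) = m%:Z.
  by rewrite -Hm; apply: eq_bigr => j _; rewrite ffunE subr0.
have hI : near_segment R p (origin n).
  by exists 0; split => //; split => // j; rewrite ffunE mul0r subr0 normr0; lra.
have [s [sp sl sI ssz]] := greedy_path hb hm hI.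
exists s; split; last by rewrite Hm ssz.
split; first by rewrite /monotone_path sp sl eqxx.
move=> h /sI [t [t0 [t1 Ht]]]; exists t; split => //; split => // j.
by rewrite !ffunE subr0 add0r.
Qed.
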